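(* Let $\mathcal{X}=\{x_1,\dots,x_n\}$ be a finite set of $n$ categories, let $\mathcal{Q}$ be a set of probability distributions on $\mathcal{X}$, let $\epsilon\in(0,1)$, and let $X=(X_1,\dots,X_p)\in\mathcal{X}^p$. If $$\inf_{Q\in\mathcal{Q}} D(\widehat{P}(X)\,\|\,Q)\;\geq\;\frac{1}{p}\log\left(\frac{1}{\epsilon}\right)+\frac{2n}{p}\log(p+1),$$ then $X$ is contaminated at significance level $\epsilon$ with respect to $\mathcal{Q}$, i.e. $X$ is not typical at significance level $\epsilon$ with respect to $\mathcal{Q}$.
   Context: For $X=(X_1,\dots,X_p)\in\mathcal{X}^p$, the empirical distribution is $\widehat{P}(X)=\frac1p(p_1,\dots,p_n)$ where $p_i=\sum_{j=1}^p\mathbf{1}\{X_j=x_i\}$. An ''empirical distribution (of $p$ samples over $n$ categories)'' is any vector of this form. For a distribution $Q$ on $\mathcal{X}$ and a set $\mathcal{S}$ of empirical distributions of $p$ samples, $\mathbb{P}_Q(\mathcal{S})$ denotes the probability that $p$ i.i.d. draws from $Q$ have empirical distribution in $\mathcal{S}$. The Kullback–Leibler divergence is $D(P\|Q)=\sum_i P_i\log(P_i/Q_i)$. Typical: let $\widehat{P}^1,\widehat{P}^2,\dots$ be an ordering of all empirical distributions of $p$ samples over the $n$ categories such that $\mathbb{P}_Q(\widehat{P}^1)\le\mathbb{P}_Q(\widehat{P}^2)\le\cdots$ (the ordering depends on $Q$). A sequence $X$ with $\widehat{P}(X)=\widehat{P}^\ell$ is typical at significance level $\epsilon$ with respect to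 $\mathcal{Q}$ iff $\sup_{Q\in\mathcal{Q}}\mathbb{P}_Q(\{\widehat{P}^1,\dots,\widehat{P}^\ell\})\ge\epsilon$ for any such ordering. $X$ is contaminated (at significance $\epsilon$ with respect to $\mathcal{Q}$) iff it is not typical. *)

From HB Require Import structures.
From mathcomp Require Import all_boot all_order all_algebra.
From mathcomp Require Import all_classical all_reals all_analysis.
Set Implicit Arguments. Unset Strict Implicit. Unset Printing Implicit Defensive.
Import Order.TTheory GRing.Theory Num.Theory.
Local Open Scope classical_set_scope.
Local Open Scope ring_scope.

(* Categories x_1..x_n are modelled by 'I_n; a sequence X in X^p by
   {ffun 'I_p -> 'I_n}; a distribution on the categories by a vector
   {ffun 'I_n -> R}. *)

Definition is_dist (R : realType) (n : nat) (Q : {ffun 'I_n -> R}) : Prop :=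
  (forall i, 0 <= Q i) /\ \sum_i Q i = 1.

Definition emp (R : realType) (n p : nat) (X : {ffun 'I_p -> 'I_n})
  : {ffun 'I_n -> R} :=
  [ffun i => #|[set j | X j == i]|%:R / p%:R].

Definition is_empirical (R : realType) (n p : nat) (P : {ffun 'I_n -> R}) : Prop :=
  exists X : {ffun 'I_p -> 'I_n}, P = emp R X.

Definition probQ (R : realType) (n p : nat) (Q P : {ffun 'I_n -> R}) : R :=
  \sum_(Y : {ffun 'I_p -> 'I_n} | emp R Y == P) \prod_(j < p) Q (Y j).

Definition valid_ordering (R : realType) (n p : nat) (Q : {ffun 'I_n -> R})
    (s : seq {ffun 'I_n -> R}) : Prop :=
  [/\ uniq s,
      (forall P, P \in s <-> is_empirical p P) &
      sorted (fun a b => probQ p Q a <= probQ p Q b) s].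

Definition prefix_prob (R : realType) (n p : nat) (Q : {ffun 'I_n -> R})
    (s : seq {ffun 'I_n -> R}) (P : {ffun 'I_n -> R}) : R :=
  \sum_(P' <- take (index P s).+1 s) probQ p Q P'.

Definition typical (R : realType) (n p : nat) (eps : R)
    (Qs : set {ffun 'I_n -> R}) (X : {ffun 'I_p -> 'I_n}) : Prop :=
  forall ord : {ffun 'I_n -> R} -> seq {ffun 'I_n -> R},
    (forall Q, Qs Q -> valid_ordering p Q (ord Q)) ->
    (eps%:E <= ereal_sup [set (prefix_prob p Q (ord Q) (emp R X))%:E | Q in Qs])%E.

Definition contaminated (R : realType) (n p : nat) (eps : R)
    (Qs : set {ffun 'I_n -> R}) (X : {ffun 'I_p -> 'I_n}) : Prop :=
  ~ typical eps Qs X.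

(* Kullback-Leibler divergence (natural log), with 0 log 0 = 0 and
   value +oo if some P_i > 0 has Q_i = 0. *)
Definition KL (R : realType) (n : nat) (P Q : {ffun 'I_n -> R}) : \bar R :=
  if [exists i, (0 < P i) && (Q i == 0)] then +oo%E
  else (\sum_(i | 0 < P i) P i * ln (P i / Q i))%:E.

(* The number of empirical distributions of p samples over n categories is at most
   (p+1)^n, and the probability under Q of the type class of P is at most
   exp(-p D(P||Q)).  So for every valid ordering, the Q-probability of the prefix
   ending at P^(X) is at most (p+1)^n exp(-p D(P^(X)||Q)), which the hypothesis
   bounds by eps / (p+1)^n < eps, uniformly in Q. *)
From HB Require Import structures.
From mathcomp Require Import all_boot all_order all_algebra.
From mathcomp Require Import all_classical all_reals all_analysis.
From mathcomp Require Import ring.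
Set Implicit Arguments. Unset Strict Implicit. Unset Printing Implicit Defensive.
Import Order.TTheory GRing.Theory Num.Theory.
Local Open Scope classical_set_scope.
Local Open Scope ring_scope.

Section Types.
Variables (R : realType) (n p : nat).
Implicit Types (X Y : {ffun 'I_p -> 'I_n}) (P Q : {ffun 'I_n -> R}).

Definition occ Y (i : 'I_n) : nat := #|[set j | Y j == i]|.

Lemma empE Y i : emp R Y i = (occ Y i)%:R / p%:R.
Proof. by rewrite ffunE. Qed.

Lemma sum_occ Y (g : 'I_n -> R) :
  \sum_(j < p) g (Y j) = \sum_i (occ Y i)%:R * g i.
Proof.
rewrite (partition_big Y xpredT) //=; apply: eq_bigr => i _.
rewrite (eq_bigr (fun=> g i)) => [|j /eqP-> //].
rewrite sumr_const mulr_natl; congr (_ *+ _); apply: eq_card => j.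
by apply/idP/idP; rewrite in_setE.
Qed.

Lemma emp_ge0 Y i : 0 <= emp R Y i.
Proof. by rewrite empE divr_ge0. Qed.

Lemma emp_gt0 Y j : 0 < emp R Y (Y j).
Proof.
have p_gt0 : (0 < p)%N by apply: leq_ltn_trans (ltn_ord j).
rewrite empE divr_gt0 ?ltr0n //; apply/card_gt0P; exists j.
by rewrite in_setE /=.
Qed.

Lemma sum_emp Y : (0 < p)%N -> \sum_i emp R Y i = 1.
Proof.
move=> p_gt0; under eq_bigr do rewrite empE.
rewrite -mulr_suml; under eq_bigr do rewrite -[_%:R]mulr1.
by rewrite -sum_occ sumr_const card_ord divff // pnatr_eq0 -lt0n.
Qed.

Lemma sum_prod_dist P : \sum_i P i = 1 ->
  \sum_(Y : {ffun 'I_p -> 'I_n}) \prod_(j < p) P (Y j) = 1.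
Proof.
move=> sumP; rewrite -(bigA_distr_bigA (fun (j : 'I_p) i => P i)) /=.
by rewrite (eq_bigr (fun=> 1)) ?big1_eq.
Qed.

Lemma probQ_ge0 Q P : (forall i, 0 <= Q i) -> 0 <= probQ p Q P.
Proof. by move=> Q_ge0; apply: sumr_ge0 => Y _; apply: prodr_ge0. Qed.

Definition KL_sum P Q : R := \sum_(i | 0 < P i) P i * ln (P i / Q i).

Lemma prod_type_class X Y Q :
  (0 < p)%N -> emp R Y = emp R X -> (forall j, 0 < Q (Y j)) ->
  \prod_(j < p) Q (Y j) =
  \prod_(j < p) emp R X (Y j) * expR (- (p%:R * KL_sum (emp R X) Q)).
Proof.
move=> p_gt0 eYX Q_gt0; set P := emp R X.
have P_gt0 j : 0 < P (Y j) by rewrite /P -eYX emp_gt0.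
have p_neq0 : p%:R != 0 :> R by rewrite pnatr_eq0 -lt0n.
have -> : p%:R * KL_sum P Q = \sum_(j < p) (ln (P (Y j)) - ln (Q (Y j))).
  under [RHS]eq_bigr do rewrite -lnV ?posrE // -lnM ?posrE ?invr_gt0 //.
  rewrite (sum_occ Y (fun i => ln (P i / Q i))) /KL_sum mulr_sumr [RHS](bigID (fun i => 0 < P i)) /=.
  rewrite [X in _ = _ + X]big1 ?addr0 => [|i]; last first.
    rewrite /P -eYX empE -leNgt pmulr_lle0 ?invr_gt0 ?ltr0n -?lt0n //.
    by rewrite lern0 => /eqP->; rewrite mul0r.
  apply: eq_bigr => i _; rewrite mulrA; congr (_ * _).
  by rewrite /P -eYX empE mulrCA divff ?mulr1.
under eq_bigr do rewrite -[Q _]lnK ?posrE //.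
under [\prod_j P _]eq_bigr do rewrite -[P _]lnK ?posrE //.
by rewrite -!expR_sum -expRD sumrB opprB addrCA subrr addr0.
Qed.

Lemma probQ_emp_eq0 X Q :
  [exists i, (0 < emp R X i) && (Q i == 0)] -> probQ p Q (emp R X) = 0.
Proof.
case/existsP => i /andP[Pi_gt0 /eqP Qi0]; rewrite /probQ big1 // => Y /eqP eYX.
have /card_gt0P[j] : (0 < occ Y i)%N.
  by move: Pi_gt0; rewrite -eYX empE lt0n; apply: contraTneq => ->; rewrite mul0r ltxx.
by rewrite in_setE /= => /eqP Yj; rewrite (bigD1 j) //= Yj Qi0 mul0r.
Qed.

Lemma probQ_emp_le_expR_KL X Q t :
  (0 < p)%N -> (forall i, 0 <= Q i) -> (t%:E <= KL (emp R X) Q)%E ->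
  probQ p Q (emp R X) <= expR (- (p%:R * t)).
Proof.
move=> p_gt0 Q_ge0; rewrite /KL.
case: ifPn => [/probQ_emp_eq0-> _|/existsPn noZero]; first exact: expR_ge0.
rewrite lee_fin => tD; set P := emp R X in noZero tD *.
apply: le_trans (_ : probQ p Q P <= expR (- (p%:R * KL_sum P Q))) _; last first.
  by rewrite ler_expR lerN2 ler_wpM2l.
have typeQ Y : emp R Y == P ->
    \prod_j Q (Y j) = \prod_j P (Y j) * expR (- (p%:R * KL_sum P Q)).
  move=> /eqP eYX; apply: prod_type_class => // j.
  rewrite lt0r Q_ge0 andbT; apply: contraNneq (noZero (Y j)) => ->.
  by rewrite -eYX emp_gt0 eqxx.
rewrite /probQ (eq_bigr _ typeQ) -mulr_suml ler_piMl ?expR_ge0 //.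
rewrite -[leRHS](sum_prod_dist (sum_emp X p_gt0)) [leRHS](bigID (fun Y => emp R Y == P)).
by rewrite lerDl sumr_ge0 // => Y _; apply: prodr_ge0 => j _; apply: emp_ge0.
Qed.

Lemma size_valid_ordering Q s : valid_ordering p Q s -> (size s <= p.+1 ^ n)%N.
Proof.
case=> s_uniq s_emp _.
pose freq (c : {ffun 'I_n -> 'I_p.+1}) : {ffun 'I_n -> R} :=
  [ffun i => (c i : nat)%:R / p%:R].
have -> : (p.+1 ^ n = size [seq freq c | c <- enum {ffun 'I_n -> 'I_p.+1}])%N.
  by rewrite size_map -cardE card_ffun !card_ord.
apply: uniq_leq_size => // P /s_emp[Y ->].
apply/mapP; exists [ffun i => inord (occ Y i)]; first by rewrite mem_enum.
apply/ffunP => i; rewrite !ffunE inordK // ltnS.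
by apply: leq_trans (max_card _) _; rewrite card_ord.
Qed.

Lemma prefix_prob_le Q s P :
  (forall i, 0 <= Q i) -> valid_ordering p Q s -> P \in s ->
  prefix_prob p Q s P <= (size s)%:R * probQ p Q P.
Proof.
move=> Q_ge0 [_ _ s_sorted] Ps; rewrite /prefix_prob.
have le_probQ_P : {in take (index P s).+1 s, forall P', probQ p Q P' <= probQ p Q P}.
  move=> P' /(nthP P)[k]; rewrite size_take_min => k_lt <-.
  rewrite nth_take; last by apply: leq_trans k_lt (geq_minl _ _).
  rewrite -[X in _ <= probQ p Q X](nth_index P Ps).
  have le_probQ_trans : transitive (fun a b => probQ p Q a <= probQ p Q b).
    by move=> ? ? ?; apply: le_trans.
  have le_probQ_refl : reflexive (fun a b => probQ p Q a <= probQ p Q b) by [].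
  apply: (sorted_leq_nth le_probQ_trans le_probQ_refl P s_sorted); rewrite ?inE ?index_mem //.
    by apply: leq_trans k_lt (geq_minr _ _).
  by rewrite -ltnS; apply: leq_trans k_lt (geq_minl _ _).
apply: le_trans (_ : \sum_(P' <- take (index P s).+1 s) probQ p Q P <= _).
  by rewrite big_seq [leRHS]big_seq; apply: ler_sum.
rewrite big_const_seq count_predT iter_addr_0 [leRHS]mulr_natl.
by apply: ler_wpMn2l; rewrite ?probQ_ge0 // size_take_min geq_minr.
Qed.

Lemma prefix_prob_emp_le_expR_KL X Q s t :
  (0 < p)%N -> (forall i, 0 <= Q i) -> valid_ordering p Q s ->
  (t%:E <= KL (emp R X) Q)%E ->
  prefix_prob p Q s (emp R X) <= (p.+1 ^ n)%:R * expR (- (p%:R * t)).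
Proof.
move=> p_gt0 Q_ge0 s_valid tKL; have [_ s_emp _] := s_valid.
apply: le_trans (prefix_prob_le Q_ge0 s_valid _) _; first by apply/s_emp; exists X.
apply: ler_pM; rewrite ?ler0n ?probQ_ge0 ?ler_nat ?(size_valid_ordering s_valid) //.
exact: probQ_emp_le_expR_KL.
Qed.

Definition ordering_by_probQ Q : seq {ffun 'I_n -> R} :=
  sort (fun a b => probQ p Q a <= probQ p Q b)
       (undup [seq emp R Y | Y <- enum {ffun 'I_p -> 'I_n}]).

Lemma ordering_by_probQ_valid Q : valid_ordering p Q (ordering_by_probQ Q).
Proof.
split; first by rewrite sort_uniq undup_uniq.
- move=> P; rewrite mem_sort mem_undup; split; first by case/mapP => Y _ ->; exists Y.
  by case=> Y ->; rewrite map_f ?mem_enum.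
- by apply: sort_sorted => a b; apply: le_total.
Qed.

End Types.

Lemma threshold_expRE (R : realType) (n p : nat) (eps : R) :
  (0 < p)%N -> 0 < eps ->
  (p.+1 ^ n)%:R *
    expR (- (p%:R * ((p%:R)^-1 * ln (eps^-1) + (2 * n)%:R / p%:R * ln (p%:R + 1)))) =
  eps / (p.+1 ^ n)%:R.
Proof.
move=> p_gt0 eps_gt0; set N : R := (p.+1 ^ n)%:R.
have N_gt0 : 0 < N by rewrite ltr0n expn_gt0.
have p_neq0 : p%:R != 0 :> R by rewrite pnatr_eq0 -lt0n.
have lnN : ln N = n%:R * ln (p%:R + 1) by rewrite /N natrX -natr1 lnXn ?ltr_wpDl // mulr_natl.
have -> : p%:R * ((p%:R)^-1 * ln (eps^-1) + (2 * n)%:R / p%:R * ln (p%:R + 1)) =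
          ln (eps^-1 * N ^+ 2).
  by rewrite lnM ?posrE ?invr_gt0 ?exprn_gt0 // lnXn // lnN natrM; field.
rewrite expRN lnK ?posrE ?mulr_gt0 ?invr_gt0 ?exprn_gt0 //; field.
by rewrite !gt_eqF.
Qed.

Theorem theorem1 (R : realType) (n p : nat) (Qs : set {ffun 'I_n -> R})
    (eps : R) (X : {ffun 'I_p -> 'I_n}) :
  (0 < p)%N ->
  (forall Q, Qs Q -> is_dist Q) ->
  0 < eps < 1 ->
  (((p%:R)^-1 * ln (eps^-1) + (2 * n)%:R / p%:R * ln (p%:R + 1))%:E
     <= ereal_inf [set KL (emp R X) Q | Q in Qs])%E ->
  contaminated eps Qs X.
Proof.
move=> p_gt0 Qs_dist /andP[eps_gt0 _] hKL.
set t := (_ + _) in hKL; set N : R := (p.+1 ^ n)%:R.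
have n_gt0 : (0 < n)%N := leq_ltn_trans (leq0n _) (ltn_ord (X (Ordinal p_gt0))).
have N_gt1 : 1 < N by rewrite /N ltr1n -[1%N](expn0 p.+1) ltn_exp2l.
have prefix_small Q : Qs Q -> prefix_prob p Q (ordering_by_probQ p Q) (emp R X) <= eps / N.
  move=> QsQ; rewrite -threshold_expRE //.
  apply: prefix_prob_emp_le_expR_KL => //; first exact: (Qs_dist Q QsQ).1.
    exact: ordering_by_probQ_valid.
  by apply: le_trans hKL _; apply: ereal_inf_lbound; exists Q.
move=> /(_ (@ordering_by_probQ R n p) (fun Q _ => ordering_by_probQ_valid p Q)).
apply/negP; rewrite -ltNge; apply: (@le_lt_trans _ _ (eps / N)%:E).
  by apply: ge_ereal_sup => _ [Q QsQ <-]; rewrite lee_fin prefix_small.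
by rewrite lte_fin gtr_pMr // invf_lt1 // (lt_trans ltr01).
Qed.
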